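(* Let $R$ be a commutative local ring with maximal ideal $J$ and residue field $K=R/J$. Let $M$ be an $R$-module and $C$ an $R$-linear relation on $M$ such that $JM\subseteq (C^{-1})'+C'$ and such that $C^\sharp/C^\flat$ has finite dimension over $K$. Then there exists a free reduction $(X\mid\rho)$ of $(M,C)$ that meets in the radical.
   Context: An $R$-linear relation on $M$ is an $R$-submodule $C\subseteq M\oplus M$. For $m\in M$, $Cm=\{m'\in M:(m,m')\in C\}$; $C^{-1}=\{(y,x):(x,y)\in C\}$. Define submodules: $C''$ = set of $m\in M$ for which there is a sequence $(m_n)_{n\in\mathbb{N}}$ in $M$ with $m_0=m$ and $m_{n+1}\in Cm_n$ for all $n$; $C'$ = set of such $m$ for which such a sequence exists with additionally $m_n=0$ for $n\gg0$; $C^\sharp=C''\cap(C^{-1})''$; $C^\flat=C''\cap(C^{-1})'+(C^{-1})''\cap C'$. Then $C^\flat\subseteq C^\sharp$ and $C^\sharp/C^\flat$ is an $R$-module (annihilated by $J$ under the hypothesis, hence a $K$-vector space). A reduction of $(M,C)$ is a pair $(X\mid\rho)$ where $X$ is an $R[T,T^{-1}]$-module and $\rho\colon X\to M$ is $R$-linear with $C^\sharp=C^\flat+\mathrm{im}(\rho)$ and $\rho(Tx)\in C\rho(x)$ for all $x\in X$. It is free if $X$ is free as an $R$-module, and meets in the radical if $\{x\in X:\rho(x)\in C^\flat\}=\mathrm{rad}(X)$, the radical of $X$ as an $R$-module (intersection of maximal $R$-submodules). *)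

From HB Require Import structures.
From mathcomp Require Import all_boot all_order all_algebra.
Set Implicit Arguments. Unset Strict Implicit. Unset Printing Implicit Defensive.
Import GRing.Theory.
Local Open Scope ring_scope.

Definition is_ideal (R : comNzRingType) (I : R -> Prop) : Prop :=
  I 0 /\ (forall x y, I x -> I y -> I (x + y)) /\ (forall a x, I x -> I (a * x)).

Definition maximal_ideal (R : comNzRingType) (I : R -> Prop) : Prop :=
  is_ideal I /\ ~ I 1 /\
  forall I' : R -> Prop, is_ideal I' -> ~ I' 1 -> (forall x, I x -> I' x) ->
    forall x, I' x -> I x.

Definition local_ring_with_max (R : comNzRingType) (J : R -> Prop) : Prop :=
  maximal_ideal J /\
  forall I : R -> Prop, maximal_ideal I -> forall x, I x <-> J x.

Definition is_submod (R : comNzRingType) (M : lmodType R) (N : M -> Prop) : Prop :=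
  N 0 /\ forall (a : R) (x y : M), N x -> N y -> N (a *: x + y).

Definition linrel (R : comNzRingType) (M : lmodType R) (C : M * M -> Prop) : Prop :=
  C (0, 0) /\
  forall (a : R) (x y x' y' : M), C (x, y) -> C (x', y') ->
    C (a *: x + x', a *: y + y').

Section Rel.
Variables (R : comNzRingType) (M : lmodType R).

Definition rel_inv (C : M * M -> Prop) : M * M -> Prop := fun p => C (p.2, p.1).

Definition rel_dd (C : M * M -> Prop) : M -> Prop := fun m =>
  exists s : nat -> M, s 0%N = m /\ forall n, C (s n, s n.+1).

Definition rel_d (C : M * M -> Prop) : M -> Prop := fun m =>
  exists s : nat -> M, s 0%N = m /\ (forall n, C (s n, s n.+1)) /\
    exists N : nat, forall n, (N <= n)%N -> s n = 0.

Definition rel_sharp (C : M * M -> Prop) : M -> Prop := fun m =>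
  rel_dd C m /\ rel_dd (rel_inv C) m.

Definition rel_flat (C : M * M -> Prop) : M -> Prop := fun m =>
  exists a b : M, m = a + b /\
    (rel_dd C a /\ rel_d (rel_inv C) a) /\
    (rel_dd (rel_inv C) b /\ rel_d C b).

Definition ideal_times_mod (J : R -> Prop) : M -> Prop := fun x =>
  exists s : seq (R * M), (forall p, p \in s -> J p.1) /\
    x = \sum_(p <- s) p.1 *: p.2.

End Rel.

(* C^sharp / C^flat is finite dimensional: finitely many elements of C^sharp
   span C^sharp modulo C^flat (over R, equivalently over K = R/J, as the
   quotient is annihilated by J). *)
Definition sharp_flat_findim (R : comNzRingType) (M : lmodType R)
    (C : M * M -> Prop) : Prop :=
  exists v : seq M, (forall x, x \in v -> rel_sharp C x) /\
    forall m, rel_sharp C m ->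
      exists (c : M -> R) (f : M), rel_flat C f /\
        m = f + \sum_(x <- v) c x *: x.

Definition is_basis (R : comNzRingType) (X : lmodType R) (B : X -> Prop) : Prop :=
  (forall x : X, exists (s : seq X) (c : X -> R),
      (forall b, b \in s -> B b) /\ x = \sum_(b <- s) c b *: b) /\
  (forall (s : seq X) (c : X -> R), uniq s -> (forall b, b \in s -> B b) ->
      \sum_(b <- s) c b *: b = 0 -> forall b, b \in s -> c b = 0).

Definition free_mod (R : comNzRingType) (X : lmodType R) : Prop :=
  exists B : X -> Prop, is_basis B.

Definition maximal_submod (R : comNzRingType) (X : lmodType R) (N : X -> Prop) : Prop :=
  is_submod N /\ (exists y, ~ N y) /\
  forall N' : X -> Prop, is_submod N' -> (forall x, N x -> N' x) ->
    (forall x, N' x) \/ (forall x, N' x -> N x).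

Definition radical (R : comNzRingType) (X : lmodType R) : X -> Prop := fun x =>
  forall N : X -> Prop, maximal_submod N -> N x.

Definition Rlinear (R : comNzRingType) (X Y : lmodType R) (f : X -> Y) : Prop :=
  forall (a : R) (x y : X), f (a *: x + y) = a *: f x + f y.

(* An R[T,T^-1]-module is an R-module X together with an R-linear
   automorphism T of X. *)
Definition is_reduction (R : comNzRingType) (M : lmodType R) (C : M * M -> Prop)
    (X : lmodType R) (T : X -> X) (rho : X -> M) : Prop :=
  Rlinear T /\ bijective T /\ Rlinear rho /\
  (forall m, rel_sharp C m <-> exists f x, rel_flat C f /\ m = f + rho x) /\
  (forall x, C (rho x, rho (T x))).

Definition meets_in_radical (R : comNzRingType) (M : lmodType R) (C : M * M -> Prop)
    (X : lmodType R) (rho : X -> M) : Prop :=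
  forall x, rel_flat C (rho x) <-> radical x.

(* Pick u_1, ..., u_n in C^sharp spanning C^sharp modulo C^flat with n minimal.
   The hypothesis on JM gives J C^sharp <= C^flat, so by minimality a combination
   sum c_i u_i is flat exactly when every c_i lies in J.  Successors and
   predecessors of the u_i inside C^sharp give C(u, f + A u) and C(g + B u, u)
   with f, g flat; then (1 - AB) u is flat, so AB = 1 mod J and A is invertible
   because R is local.  Splitting f into its C'' /\ (C^-1)' and (C^-1)'' /\ C'
   parts and telescoping them along A and A^-1 corrects u by flat elements to a
   family v with C(v, A v).  Then rho x = sum x_i v_i on X = R^n with T x = x A is
   the reduction: X is free, and rho x is flat iff x lies in J^n = rad X. *)

From mathcomp Require Import all_boot all_order all_algebra.
From mathcomp Require Import fingroup perm boolp.
From mathcomp Require classical_sets.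
Set Implicit Arguments. Unset Strict Implicit. Unset Printing Implicit Defensive.
Import GRing.Theory.
Local Open Scope ring_scope.

Section Submodule.
Variables (R : comNzRingType) (X : lmodType R) (N : X -> Prop).
Hypothesis N_submod : is_submod N.

Lemma submod0 : N 0. Proof. by case: N_submod. Qed.

Lemma submodD x y : N x -> N y -> N (x + y).
Proof. by rewrite -[x in x + _]scale1r; apply: N_submod.2. Qed.

Lemma submodZ a x : N x -> N (a *: x).
Proof. by move=> Nx; rewrite -[_ *: _]addr0; apply: N_submod.2 => //; exact: submod0. Qed.

Lemma submodN x : N x -> N (- x).
Proof. by rewrite -scaleN1r; exact: submodZ. Qed.

Lemma submodB x y : N x -> N y -> N (x - y).
Proof. by move=> Nx Ny; apply: submodD => //; exact: submodN. Qed.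

Lemma submod_sum (I : Type) (r : seq I) (F : I -> X) :
  (forall i, N (F i)) -> N (\sum_(i <- r) F i).
Proof. by move=> NF; elim/big_rec: _ => [|i x _ Nx]; [exact: submod0 | exact: submodD]. Qed.

End Submodule.

Section RelationMap.
Variables (R : comNzRingType) (V : lmodType R) (D : V * V -> Prop) (phi : V -> V).
Hypothesis phiD : {morph phi : x y / x + y}.
Hypothesis phiC : forall x y, D (x, y) -> D (phi x, phi y).

Lemma morph0 : phi 0 = 0.
Proof. by apply: (@addrI _ (phi 0)); rewrite -phiD !addr0. Qed.

Lemma rel_dd_map x : rel_dd D x -> rel_dd D (phi x).
Proof. by move=> [s [<- Ds]]; exists (phi \o s); split=> // n; exact: phiC. Qed.

Lemma rel_d_map x : rel_d D x -> rel_d D (phi x).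
Proof.
move=> [s [<- [Ds [N sN]]]]; exists (phi \o s); split=> //; split=> [n|].
  exact: phiC.
by exists N => n /sN /= ->; exact: morph0.
Qed.

Lemma rel_inv_map x y : rel_inv D (x, y) -> rel_inv D (phi x, phi y).
Proof. exact: phiC. Qed.

End RelationMap.

Section LinearRelation.
Variables (R : comNzRingType) (M : lmodType R) (C : M * M -> Prop).
Hypothesis C_linrel : linrel C.

Lemma linrel_submod : is_submod C.
Proof. by case: C_linrel => C0 CZ; split=> // a [x y] [x' y']; exact: CZ. Qed.

Lemma linrelD x y x' y' : C (x, y) -> C (x', y') -> C (x + x', y + y').
Proof. exact: (submodD linrel_submod). Qed.

Lemma linrelB x y x' y' : C (x, y) -> C (x', y') -> C (x - x', y - y').
Proof. exact: (submodB linrel_submod). Qed.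

Lemma linrelZ a x y : C (x, y) -> C (a *: x, a *: y).
Proof. exact: (submodZ linrel_submod). Qed.

Lemma linrel_sum (I : Type) (r : seq I) (f g : I -> M) :
  (forall i, C (f i, g i)) -> C (\sum_(i <- r) f i, \sum_(i <- r) g i).
Proof.
by move=> Cfg; elim/big_rec2: _ => [|i x y _ Cxy]; [case: C_linrel | exact: linrelD].
Qed.

Lemma linrel_inv : linrel (rel_inv C).
Proof. by case: C_linrel => C0 CZ; split=> // a x y x' y'; exact: CZ. Qed.

Lemma rel_dd_submod : is_submod (rel_dd C).
Proof.
split; first by exists (fun=> 0); split=> // n; case: C_linrel.
move=> a x y [s [<- Cs]] [t [<- Ct]].
by exists (fun n => a *: s n + t n); split=> // n; exact: C_linrel.2.
Qed.

Lemma rel_d_submod : is_submod (rel_d C).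
Proof.
split; first by exists (fun=> 0); split=> //; split; [case: C_linrel | exists 0%N].
move=> a x y [s [<- [Cs [N sN]]]] [t [<- [Ct [N' tN']]]].
exists (fun n => a *: s n + t n); split=> //; split=> [n|]; first exact: C_linrel.2.
exists (maxn N N') => n; rewrite geq_max => /andP[/sN -> /tN' ->].
by rewrite scaler0 addr0.
Qed.

Lemma rel_d_dd x : rel_d C x -> rel_dd C x.
Proof. by move=> [s [s0 [Cs _]]]; exists s. Qed.

Lemma rel_dd_cons x y : C (x, y) -> rel_dd C y -> rel_dd C x.
Proof.
move=> Cxy [s [s0 Cs]]; exists (fun n => if n is k.+1 then s k else x).
by split=> // -[|n] /=; rewrite ?s0.
Qed.

Lemma rel_d_cons x y : C (x, y) -> rel_d C y -> rel_d C x.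
Proof.
move=> Cxy [s [s0 [Cs [N sN]]]]; exists (fun n => if n is k.+1 then s k else x).
split=> //; split; first by case=> [|n] /=; rewrite ?s0.
by exists N.+1 => -[|n] // /sN.
Qed.

Lemma rel_d_of_zero x : C (x, 0) -> rel_d C x.
Proof. by move=> Cx0; apply: rel_d_cons Cx0 _; exact: (submod0 rel_d_submod). Qed.

Lemma rel_dd_next x : rel_dd C x -> exists y, C (x, y) /\ rel_dd C y.
Proof.
move=> [s [<- Cs]]; exists (s 1%N); split; first exact: Cs.
by exists (s \o succn); split=> // n; exact: Cs.
Qed.

Lemma rel_d_next x : rel_d C x -> exists y, C (x, y) /\ rel_d C y.
Proof.
move=> [s [<- [Cs [N sN]]]]; exists (s 1%N); split; first exact: Cs.
exists (s \o succn); split=> //; split=> [n|]; first exact: Cs.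
by exists N => n /leqW /sN.
Qed.

End LinearRelation.

Definition flat_summand (R : comNzRingType) (M : lmodType R) (C : M * M -> Prop)
    (x : M) : Prop :=
  rel_dd C x /\ rel_d (rel_inv C) x.

Section FlatSummand.
Variables (R : comNzRingType) (M : lmodType R) (C : M * M -> Prop).
Hypothesis C_linrel : linrel C.
Let Ci_linrel := linrel_inv C_linrel.

Lemma flat_summand_submod : is_submod (flat_summand C).
Proof.
have [dd0 ddZ] := rel_dd_submod C_linrel; have [d0 dZ] := rel_d_submod Ci_linrel.
by split=> // a x y [? ?] [? ?]; split; [exact: ddZ | exact: dZ].
Qed.

Lemma flat_summand_sharp x : flat_summand C x -> rel_sharp C x.
Proof. by move=> [xdd xd]; split=> //; exact: rel_d_dd. Qed.

Lemma flat_summand_prev x : flat_summand C x -> exists y, C (y, x) /\ flat_summand C y.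
Proof.
move=> [xdd xd]; have [y [Cyx yd]] := rel_d_next xd.
by exists y; split=> //; split=> //; exact: (rel_dd_cons (C := C) (x := y) Cyx xdd).
Qed.

Lemma flat_summand_next x : flat_summand C x -> exists y, C (x, y) /\ flat_summand C y.
Proof.
move=> [xdd xd]; have [y [Cxy ydd]] := rel_dd_next xdd.
by exists y; split=> //; split=> //; exact: (rel_d_cons (C := rel_inv C) (x := y) Cxy).
Qed.

Section Telescope.
Variable phi : M -> M.
Hypothesis phiD : {morph phi : x y / x + y}.
Hypothesis phiC : forall x y, C (x, y) -> C (phi x, phi y).

Lemma flat_summand_map x : flat_summand C x -> flat_summand C (phi x).
Proof.
move=> [xdd xd]; split; first exact: rel_dd_map.
exact: (rel_d_map phiD (rel_inv_map phiC)).
Qed.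

(* With x = s_0 <- s_1 <- ... <- s_N = 0 a backward C-chain, the witness is
   y = s_1 + phi s_2 + ... + phi^(N-2) s_(N-1). *)
Lemma flat_summand_telescope x :
  flat_summand C x -> exists y, flat_summand C y /\ C (y, phi y + x).
Proof.
move=> [xdd [s [s0 [Cs [N sN]]]]].
elim: N x s s0 Cs sN xdd => [|N IH] x s <- Cs sN xdd.
  exists 0; rewrite (morph0 phiD) sN // addr0.
  by split; [exact: (submod0 flat_summand_submod) | case: C_linrel].
have s1dd : rel_dd C (s 1%N) := rel_dd_cons (C := C) (x := s 1%N) (Cs 0%N) xdd.
have [|y [yflat Cy]] := IH (s 1%N) (s \o succn) erefl (fun n => Cs n.+1) _ s1dd.
  by move=> n Nn; apply: sN.
exists (s 1%N + phi y); split.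
  apply: (submodD flat_summand_submod) => //; last exact: flat_summand_map.
  split=> //; exists (s \o succn); split=> //; split=> [n|]; first exact: Cs.
  by exists N => n Nn; apply: sN.
have := linrelD C_linrel (Cs 0%N : C (s 1%N, s 0%N)) (phiC Cy).
by rewrite !phiD (addrC (s 0%N)) (addrC (phi (phi y))).
Qed.

End Telescope.
End FlatSummand.

Section SharpFlat.
Variables (R : comNzRingType) (M : lmodType R) (C : M * M -> Prop).
Hypothesis C_linrel : linrel C.
Let Ci_linrel := linrel_inv C_linrel.

Lemma rel_sharp_inv x : rel_sharp (rel_inv C) x <-> rel_sharp C x.
Proof. by split=> -[]. Qed.

Lemma rel_flat_summandL x : flat_summand C x -> rel_flat C x.
Proof.
move=> Hx; exists x, 0; rewrite addr0; split=> //; split=> //.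
exact: (submod0 (flat_summand_submod Ci_linrel)).
Qed.

Lemma rel_flat_summandR x : flat_summand (rel_inv C) x -> rel_flat C x.
Proof.
move=> Hx; exists 0, x; rewrite add0r; split=> //; split=> //.
exact: (submod0 (flat_summand_submod C_linrel)).
Qed.

Lemma rel_sharp_submod : is_submod (rel_sharp C).
Proof.
have [dd0 ddZ] := rel_dd_submod C_linrel; have [ddi0 ddiZ] := rel_dd_submod Ci_linrel.
by split=> // a x y [? ?] [? ?]; split; [exact: ddZ | exact: ddiZ].
Qed.

Lemma rel_flat_submod : is_submod (rel_flat C).
Proof.
have [L0 LZ] := flat_summand_submod C_linrel; have [R0 RZ] := flat_summand_submod Ci_linrel.
split; first by exists 0, 0; rewrite addr0.
move=> a _ _ [x [x' [-> [Lx Rx']]]] [y [y' [-> [Ly Ry']]]].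
exists (a *: x + y), (a *: x' + y'); split; first by rewrite scalerDr addrACA.
by split; [exact: LZ | exact: RZ].
Qed.

Lemma rel_flat_sharp x : rel_flat C x -> rel_sharp C x.
Proof.
move=> [a [b [-> [Ha Hb]]]]; apply: (submodD rel_sharp_submod).
  exact: flat_summand_sharp.
by apply/rel_sharp_inv; exact: flat_summand_sharp.
Qed.

Lemma rel_sharp_next x : rel_sharp C x -> exists y, C (x, y) /\ rel_sharp C y.
Proof.
move=> [xdd xddi]; have [y [Cxy ydd]] := rel_dd_next xdd.
by exists y; split=> //; split=> //; exact: (rel_dd_cons (C := rel_inv C) (x := y) Cxy).
Qed.

Lemma rel_flat_prev y : rel_flat C y -> exists x, C (x, y) /\ rel_flat C x.
Proof.
move=> [a [b [-> [Ha Hb]]]].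
have [a' [Ca'a Ha']] := flat_summand_prev Ha.
have [b' [Cbb' Hb']] := flat_summand_next (C := rel_inv C) Hb.
exists (a' + b'); split; first exact: linrelD.
by exists a', b'.
Qed.

(* Compare x with a flat predecessor x' of y: x - x' is C-related to 0. *)
Lemma rel_flat_of_next x y : C (x, y) -> rel_flat C y -> rel_sharp C x -> rel_flat C x.
Proof.
move=> Cxy /rel_flat_prev [x' [Cx'y Hx']] Hx.
have Cx0 : C (x - x', 0) by rewrite -(subrr y); exact: linrelB.
have Rx : flat_summand (rel_inv C) (x - x').
  split; last exact: rel_d_of_zero.
  by apply: (submodB (rel_dd_submod Ci_linrel)); [case: Hx | case: (rel_flat_sharp Hx')].
by rewrite -(subrKC x' x); apply: (submodD rel_flat_submod) => //; exact: rel_flat_summandR.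
Qed.

Section Map.
Variable phi : M -> M.
Hypothesis phiD : {morph phi : x y / x + y}.
Hypothesis phiC : forall x y, C (x, y) -> C (phi x, phi y).

Lemma rel_flat_map x : rel_flat C x -> rel_flat C (phi x).
Proof.
move=> [a [b [-> [Ha Hb]]]]; exists (phi a), (phi b); rewrite phiD; split=> //.
by split; [exact: flat_summand_map | exact: (flat_summand_map phiD (rel_inv_map phiC))].
Qed.

Lemma rel_sharp_map x : rel_sharp C x -> rel_sharp C (phi x).
Proof.
by move=> [xdd xddi]; split; [exact: rel_dd_map | exact: (rel_dd_map (rel_inv_map phiC))].
Qed.

End Map.
End SharpFlat.

Section Ideal.
Variables (R : comNzRingType) (I : R -> Prop).
Hypothesis I_ideal : is_ideal I.

Lemma ideal0 : I 0. Proof. by case: I_ideal. Qed.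
Lemma idealD x y : I x -> I y -> I (x + y). Proof. by case: I_ideal => _ [ID _]; exact: ID. Qed.
Lemma idealMl a x : I x -> I (a * x). Proof. by case: I_ideal => _ [_ IM]; exact: IM. Qed.
Lemma idealMr a x : I x -> I (x * a). Proof. by rewrite mulrC; exact: idealMl. Qed.
Lemma idealN x : I x -> I (- x). Proof. by rewrite -mulN1r; exact: idealMl. Qed.
Lemma idealB x y : I x -> I y -> I (x - y).
Proof. by move=> Ix Iy; apply: idealD => //; exact: idealN. Qed.

End Ideal.

Section Krull.
Import classical_sets.
Local Open Scope classical_set_scope.

(* Zorn is applied to the proper ideals containing [r] together with the empty
   set, so that the union of the empty chain is admissible. *)
Lemma maximal_ideal_exists (R : comNzRingType) (r : R) :
  ~ (exists s, s * r = 1) -> exists I : R -> Prop, maximal_ideal I /\ I r.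
Proof.
move=> r_nonunit.
pose P (A : R -> Prop) := (forall t, ~ A t) \/ [/\ is_ideal A, ~ A 1 & A r].
have Rr_ideal : is_ideal (fun x => exists s, x = s * r).
  split; first by exists 0; rewrite mul0r.
  split; first by move=> _ _ [s ->] [s' ->]; exists (s + s'); rewrite mulrDl.
  by move=> a _ [s ->]; exists (a * s); rewrite mulrA.
have [A [PA Amax]] : exists A, P A /\ forall B, A `<` B -> ~ P B.
  apply: Zorn_bigcup => F FP Ftot.
  have [[X0 FX0 [t0 X0t0]]|] := pselect (exists2 X, F X & exists t, X t); last first.
    by move=> noX; left=> t [X FX Xt]; apply: noX; exists X => //; exists t.
  have ideal_of X t : F X -> X t -> [/\ is_ideal X, ~ X 1 & X r].
    by move=> FX Xt; case: (FP X FX) => // /(_ t).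
  have [X0_ideal _ X0r] := ideal_of X0 t0 FX0 X0t0.
  right; split; last by exists X0.
  - split; first by exists X0 => //; exact: ideal0.
    split=> [x y [X FX Xx] [Y FY Yy]|a x [X FX Xx]].
      have [X_ideal _ _] := ideal_of X x FX Xx; have [Y_ideal _ _] := ideal_of Y y FY Yy.
      have [XY|YX] := Ftot X Y FX FY.
        by exists Y => //; apply: idealD => //; exact: XY.
      by exists X => //; apply: idealD => //; exact: YX.
    have [X_ideal _ _] := ideal_of X x FX Xx.
    by exists X => //; exact: idealMl.
  - by move=> [X FX X1]; have [] := ideal_of X 1 FX X1.
case: PA => [A_empty|[A_ideal A1 Ar]].
  exfalso; apply: (Amax (fun x => exists s, x = s * r)).
    split=> [t /A_empty //|BA]; apply: (A_empty r); apply: BA.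
    by exists 1; rewrite mul1r.
  right; split=> //; last by exists 1; rewrite mul1r.
  by move=> [s s1]; apply: r_nonunit; exists s.
exists A; split=> //; split=> //; split=> // I' I'_ideal I'1 AI' x I'x.
apply: contrapT => Ax; apply: (Amax I').
  by split=> // I'A; apply: Ax; exact: I'A.
by right; split=> //; exact: AI'.
Qed.

End Krull.

Section LocalRing.
Variables (R : comNzRingType) (J : R -> Prop).
Hypothesis J_local : local_ring_with_max J.

Lemma local_ideal : is_ideal J. Proof. by case: J_local => -[]. Qed.

Lemma local_notJ1 : ~ J 1. Proof. by case: J_local => -[_ []]. Qed.

Lemma local_comaximal r : ~ J r -> exists j s, J j /\ 1 = j + s * r.
Proof.
move=> Jr; apply: contra_notP Jr => no_comb.
pose I x := exists j s, J j /\ x = j + s * r.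
have I_ideal : is_ideal I.
  split; first by exists 0, 0; rewrite mul0r addr0; split=> //; exact: ideal0 local_ideal.
  split=> [_ _ [j [s [Jj ->]]] [j' [s' [Jj' ->]]]|a _ [j [s [Jj ->]]]].
    exists (j + j'), (s + s'); split; first exact: (idealD local_ideal Jj Jj').
    by rewrite mulrDl addrACA.
  exists (a * j), (a * s); split; first exact: (idealMl local_ideal a Jj).
  by rewrite mulrDr mulrA.
case: J_local => -[_ [_ Jmax]] _; apply: (Jmax I) => //.
  by move=> x Jx; exists x, 0; rewrite mul0r addr0.
by exists 0, 1; rewrite mul1r add0r; split=> //; exact: ideal0 local_ideal.
Qed.

Lemma local_unit r : ~ J r -> exists s, s * r = 1.
Proof.
move=> Jr; apply: contra_notP Jr => /maximal_ideal_exists [I [I_max Ir]].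
by case: J_local => _ /(_ I I_max r) <-.
Qed.

End LocalRing.

Section LocalMatrix.
Variables (R : comNzRingType) (J : R -> Prop).
Hypothesis J_local : local_ring_with_max J.
Let J_ideal := local_ideal J_local.

Lemma det_near1 n (A : 'M[R]_n) :
  (forall i j, J (A i j - (i == j)%:R)) -> J (\det A - 1).
Proof.
move=> AJ; rewrite /determinant (bigD1 1%g) //= odd_perm1 expr0 mul1r addrAC.
apply: (idealD J_ideal).
  apply: (big_ind (fun x => J (x - 1))); first by rewrite subrr; exact: ideal0.
    move=> x y Jx Jy; have -> : x * y - 1 = x * (y - 1) + (x - 1).
      by rewrite mulrBr mulr1 addrA subrK.
    by apply: (idealD J_ideal) => //; exact: idealMl.
  by move=> i _; rewrite perm1; have := AJ i i; rewrite eqxx.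
apply: (big_ind J); [exact: ideal0 | exact: idealD | move=> s s1].
apply: (idealMl J_ideal).
have [i si] : exists i, s i != i.
  apply: contrapT => s_id; case/eqP: s1; apply/permP => i; rewrite perm1.
  by apply/eqP; apply: contrapT => si; apply: s_id; exists i; apply/negP.
rewrite (bigD1 i) //=; apply: (idealMr J_ideal).
by have := AJ i (s i); rewrite eq_sym (negbTE si) subr0.
Qed.

Lemma mx_inv_near1 n (A B : 'M[R]_n) :
  (forall i j, J ((A *m B) i j - (i == j)%:R)) ->
  exists A' : 'M[R]_n, A *m A' = 1%:M /\ A' *m A = 1%:M.
Proof.
move=> /det_near1; rewrite det_mulmx => Jdet.
have [s s_inv] : exists s, s * (\det A * \det B) = 1.
  apply: (local_unit J_local) => Jdet'; apply: (local_notJ1 J_local).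
  by have := idealB J_ideal Jdet' Jdet; rewrite opprB addrC subrK.
exists ((s * \det B) *: \adj A); split.
  by rewrite -scalemxAr mul_mx_adj scale_scalar_mx -s_inv mulrAC mulrA.
by rewrite -scalemxAl mul_adj_mx scale_scalar_mx -s_inv mulrAC mulrA.
Qed.

End LocalMatrix.

Section Radical.
Variables (R : comNzRingType) (J : R -> Prop).
Hypothesis J_local : local_ring_with_max J.
Let J_ideal := local_ideal J_local.

Lemma annihilator_maximal (X : lmodType R) (N : X -> Prop) y :
  maximal_submod N -> ~ N y -> maximal_ideal (fun r => N (r *: y)).
Proof.
move=> [N_submod [_ Nmax]] Ny; split; [|split; first by rewrite scale1r].
  split; first by rewrite scale0r; exact: submod0.
  split=> [a b Na Nb|a b Nb]; first by rewrite scalerDl; exact: submodD.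
  by rewrite -scalerA; exact: submodZ.
move=> I I_ideal I1 NI r Ir; apply: contrapT => Nry.
pose N' z := exists n t, N n /\ z = n + t *: (r *: y).
have N'_submod : is_submod N'.
  split; first by exists 0, 0; rewrite scale0r addr0; split=> //; exact: submod0.
  move=> a _ _ [n [t [Nn ->]]] [n' [t' [Nn' ->]]].
  exists (a *: n + n'), (a * t + t'); split; first exact: N_submod.2.
  by rewrite scalerDr scalerA addrACA scalerDl scalerA.
have NN' x : N x -> N' x by move=> Nx; exists x, 0; rewrite scale0r addr0.
have [N'_all|N'N] := Nmax N' N'_submod NN'.
  have [n [t [Nn ey]]] := N'_all y; apply: I1.
  rewrite -(subrK (t * r) 1); apply: (idealD I_ideal); last exact: idealMl.
  by apply: NI; rewrite scalerBl scale1r -scalerA {1}ey addrK.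
by apply: Nry; apply: N'N; exists 0, 1; rewrite scale1r add0r; split=> //; exact: submod0.
Qed.

Lemma maximal_submod_J (X : lmodType R) (N : X -> Prop) j y :
  maximal_submod N -> J j -> N (j *: y).
Proof.
move=> N_max Jj; have [Ny|Ny] := pselect (N y); first exact: (submodZ N_max.1).
by case: J_local => _ /(_ _ (annihilator_maximal N_max Ny) j) ->.
Qed.

Lemma coord_maximal_submod n (k : 'I_n) : maximal_submod (fun y : 'rV[R]_n => J (y 0 k)).
Proof.
split; [|split].
- split; first by rewrite mxE; exact: ideal0.
  by move=> a y z Jy Jz; rewrite !mxE; apply: (idealD J_ideal) => //; exact: idealMl.
- by exists (delta_mx 0 k); rewrite mxE !eqxx; exact: local_notJ1.
move=> N' N'_submod sub.
have [[z [N'z Jz]]|no_z] := pselect (exists z, N' z /\ ~ J (z 0 k)); last first.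
  by right=> z N'z; apply: contrapT => Jz; apply: no_z; exists z.
left; have [j [s [Jj e1]]] := local_comaximal J_local Jz.
have N'ek : N' (delta_mx 0 k).
  rewrite -(subrK (s *: z) (delta_mx 0 k)); apply: (submodD N'_submod).
    by apply: sub; rewrite !mxE !eqxx /= e1 addrK.
  exact: (submodZ N'_submod).
move=> y; rewrite -(subrK (y 0 k *: delta_mx 0 k) y); apply: (submodD N'_submod).
  by apply: sub; rewrite !mxE !eqxx /= mulr1 subrr; exact: ideal0.
exact: (submodZ N'_submod).
Qed.

Lemma radical_rV n (x : 'rV[R]_n) : radical x <-> forall i, J (x 0 i).
Proof.
split=> [rad_x k | Jx N N_max]; first exact: (rad_x _ (coord_maximal_submod k)).
rewrite (row_sum_delta x); apply: (submod_sum N_max.1) => i.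
exact: maximal_submod_J.
Qed.

End Radical.

Lemma free_rV (R : comNzRingType) n : free_mod 'rV[R]_n.
Proof.
exists (fun b => exists i, b = 'e_i); split.
  move=> x; exists [seq 'e_i | i <- index_enum 'I_n].
  exists (fun b : 'rV[R]_n => \sum_j b 0 j * x 0 j); split.
    by move=> b /mapP [i _ ->]; exists i.
  rewrite big_map {1}(row_sum_delta x); apply: eq_bigr => i _; congr (_ *: _).
  rewrite (bigD1 i) //= big1 ?addr0; first by rewrite mxE !eqxx mul1r.
  by move=> j ji; rewrite mxE (negbTE ji) andbF mul0r.
move=> s c s_uniq s_basis s0 b bs; have [k ebk] := s_basis b bs; subst b.
have := congr1 (fun m : 'rV[R]_n => m 0 k) s0; rewrite summxE (bigD1_seq 'e_k) //=.
rewrite mxE big_seq_cond big1 ?addr0; first by rewrite !mxE !eqxx mulr1.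
move=> b' /andP[b's b'k]; have [i ei] := s_basis b' b's; rewrite !mxE ei mxE eqxx /=.
by case: (eqVneq k i) b'k => [->|_ _]; rewrite ?ei ?eqxx ?mulr0.
Qed.

Section VectorRelation.
Variables (R : comNzRingType) (M : lmodType R) (n : nat).
Local Notation vec := {ffun 'I_n -> M}.

Definition rel_vec (C : M * M -> Prop) (p : vec * vec) : Prop :=
  forall i, C (p.1 i, p.2 i).

Definition mx_act (A : 'M[R]_n) (x : vec) : vec := [ffun i => \sum_j A i j *: x j].

Lemma mx_actD A : {morph mx_act A : x y / x + y}.
Proof.
move=> x y; apply/ffunP => i; rewrite !ffunE -big_split.
by apply: eq_bigr => j _; rewrite ffunE scalerDr.
Qed.

Lemma mx_actB A : {morph mx_act A : x y / x - y}.
Proof.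
move=> x y; apply/ffunP => i; rewrite !ffunE -sumrB.
by apply: eq_bigr => j _; rewrite !ffunE scalerBr.
Qed.

Lemma mx_act_mul A B x : mx_act (A *m B) x = mx_act A (mx_act B x).
Proof.
apply/ffunP => i; rewrite !ffunE.
under eq_bigr do rewrite mxE scaler_suml.
rewrite exchange_big /=; apply: eq_bigr => k _.
by rewrite ffunE scaler_sumr; apply: eq_bigr => j _; rewrite scalerA.
Qed.

Lemma mx_act1 x : mx_act 1%:M x = x.
Proof.
apply/ffunP => i; rewrite ffunE (bigD1 i) //= big1 ?addr0.
  by rewrite mxE eqxx scale1r.
by move=> j ji; rewrite mxE eq_sym (negbTE ji) scale0r.
Qed.

Lemma mx_actBl A B x : mx_act (A - B) x = mx_act A x - mx_act B x.
Proof.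
by apply/ffunP => i; rewrite !ffunE -sumrB; apply: eq_bigr => j _; rewrite !mxE scalerBl.
Qed.

Lemma linrel_vec C : linrel C -> linrel (rel_vec C).
Proof.
move=> [C0 CZ]; split=> [i|a x y x' y' Cxy Cx'y' i]; rewrite /= !ffunE //.
exact: CZ.
Qed.

Lemma mx_act_rel C A x y :
  linrel C -> rel_vec C (x, y) -> rel_vec C (mx_act A x, mx_act A y).
Proof.
move=> C_linrel Cxy i; rewrite /= !ffunE.
by apply: linrel_sum => // j; apply: linrelZ.
Qed.

Lemma rel_dd_vec C x : rel_dd (rel_vec C) x <-> forall i, rel_dd C (x i).
Proof.
split=> [[s [<- Cs]] i|xdd]; first by exists (fun m => s m i); split=> // m; exact: Cs.
have [s si] := choice xdd.
exists (fun m => [ffun i => s i m]); split.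
  by apply/ffunP => i; rewrite ffunE; case: (si i).
by move=> m i; rewrite /= !ffunE; case: (si i) => _; apply.
Qed.

Lemma rel_d_vec C x : rel_d (rel_vec C) x <-> forall i, rel_d C (x i).
Proof.
split=> [[s [<- [Cs [N sN]]]] i|xd].
  exists (fun m => s m i); split=> //; split=> [m|]; first exact: Cs.
  by exists N => m /sN ->; rewrite ffunE.
have {}xd i : exists sN : (nat -> M) * nat, [/\ sN.1 0%N = x i,
    forall m, C (sN.1 m, sN.1 m.+1) & forall m, (sN.2 <= m)%N -> sN.1 m = 0].
  by have [s [s0 [Cs [N sN]]]] := xd i; exists (s, N).
have [sN siN] := choice xd.
exists (fun m => [ffun i => (sN i).1 m]); split.
  by apply/ffunP => i; rewrite ffunE; case: (siN i).
split=> [m i|]; first by rewrite /= !ffunE; case: (siN i).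
exists (\max_i (sN i).2) => m Nm; apply/ffunP => i; rewrite !ffunE.
by case: (siN i) => _ _; apply; exact: leq_trans (leq_bigmax i) Nm.
Qed.

Lemma flat_summand_vec C x : flat_summand (rel_vec C) x <-> forall i, flat_summand C (x i).
Proof.
rewrite /flat_summand rel_dd_vec.
split=> [[xdd /(rel_d_vec (rel_inv C)) xd] i|xi]; first by split; [exact: xdd | exact: xd].
by split=> [i|]; [case: (xi i) | apply/(rel_d_vec (rel_inv C)) => i; case: (xi i)].
Qed.

Lemma rel_sharp_vec C x : rel_sharp (rel_vec C) x <-> forall i, rel_sharp C (x i).
Proof.
rewrite /rel_sharp rel_dd_vec.
split=> [[xdd /(rel_dd_vec (rel_inv C)) xddi] i|xi]; first by split; [exact: xdd | exact: xddi].
by split=> [i|]; [case: (xi i) | apply/(rel_dd_vec (rel_inv C)) => i; case: (xi i)].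
Qed.

Lemma rel_flat_vec C x : rel_flat (rel_vec C) x <-> forall i, rel_flat C (x i).
Proof.
split=> [[a [b [-> [/flat_summand_vec Ha /(flat_summand_vec (rel_inv C)) Hb]]]] i|xi].
  by rewrite ffunE; exists (a i), (b i); split=> //; split; [exact: Ha | exact: Hb].
have {}xi i : exists ab : M * M,
    [/\ x i = ab.1 + ab.2, flat_summand C ab.1 & flat_summand (rel_inv C) ab.2].
  by have [a [b [xab [Ha Hb]]]] := xi i; exists (a, b).
have [ab abi] := choice xi.
exists [ffun i => (ab i).1], [ffun i => (ab i).2]; split.
  by apply/ffunP => i; rewrite !ffunE; case: (abi i).
split; first by apply/flat_summand_vec => i; rewrite ffunE; case: (abi i).
by apply/(flat_summand_vec (rel_inv C)) => i; rewrite ffunE; case: (abi i).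
Qed.

End VectorRelation.

Section Correction.
Variables (R : comNzRingType) (M : lmodType R) (C : M * M -> Prop) (n : nat).
Hypothesis C_linrel : linrel C.
Local Notation vec := {ffun 'I_n -> M}.
Let CV := linrel_vec n C_linrel.
Let CVi := linrel_inv CV.

Lemma mx_act_rel_inv A (x y : vec) :
  rel_inv (rel_vec C) (x, y) -> rel_inv (rel_vec C) (mx_act A x, mx_act A y).
Proof. exact: mx_act_rel. Qed.

(* The flat error [f = p + q] is absorbed by telescoping [p] forward along [A]
   and [q] backward along [A^-1]. *)
Lemma flat_correction (A A' : 'M[R]_n) (u f : vec) :
  A *m A' = 1%:M -> rel_flat (rel_vec C) f -> rel_vec C (u, f + mx_act A u) ->
  exists v, rel_flat (rel_vec C) (v - u) /\ rel_vec C (v, mx_act A v).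
Proof.
move=> AA' [p [q [-> [Hp Hq]]]] Cu.
have [y [Hy Cy]] := flat_summand_telescope CV (mx_actD A)
  (fun x y => mx_act_rel A C_linrel) Hp.
have Hq' := flat_summand_map (mx_actD A') (@mx_act_rel_inv A') Hq.
have [z [Hz Cz]] := flat_summand_telescope CVi (mx_actD A')
  (@mx_act_rel_inv A') Hq'.
exists (u - y + mx_act A' (z + q)); split.
  rewrite addrAC [u - y - u]addrAC subrr add0r.
  apply: (submodD (rel_flat_submod CV)).
    by apply: (submodN (rel_flat_submod CV)); exact: rel_flat_summandL.
  apply: (rel_flat_summandR CV); apply: (flat_summand_map (mx_actD A') (@mx_act_rel_inv A')).
  exact: (submodD (flat_summand_submod CVi)).
have := linrelD CV (linrelB CV Cu Cy) (Cz : rel_vec C (mx_act A' z + mx_act A' q, z)).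
rewrite -mx_actD; congr (rel_vec C (_, _)).
rewrite mx_actD mx_actB -mx_act_mul AA' mx_act1.
rewrite -(addrA p) (addrC p) (addrC (mx_act A y)) addrKA.
by rewrite (addrC q) (addrAC (mx_act A u) q) -(addrA (_ - _)) (addrC q z).
Qed.

End Correction.

Section Spanning.
Variables (R : comNzRingType) (M : lmodType R) (C : M * M -> Prop).
Hypothesis C_linrel : linrel C.

Definition spans_sharp n (u : {ffun 'I_n -> M}) : Prop :=
  (forall i, rel_sharp C (u i)) /\
  forall m, rel_sharp C m ->
    exists (c : 'I_n -> R) (f : M), rel_flat C f /\ m = f + \sum_i c i *: u i.

Definition minimal_spans n (u : {ffun 'I_n -> M}) : Prop :=
  spans_sharp u /\ forall k (v : {ffun 'I_k -> M}), spans_sharp v -> (n <= k)%N.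

Lemma minimal_spans_exists :
  sharp_flat_findim C -> exists n (u : {ffun 'I_n -> M}), minimal_spans u.
Proof.
move=> [v [v_sharp v_span]].
have spans_ex : exists k, `[< exists u : {ffun 'I_k -> M}, spans_sharp u >].
  exists (size v); apply/asboolP; exists [ffun i : 'I_(size v) => v`_i]; split.
    by move=> i; rewrite ffunE; apply: v_sharp; exact: mem_nth.
  move=> m /v_span [c [f [Hf ->]]]; exists (fun i => c v`_i), f; split=> //.
  by rewrite (big_nth 0) big_mkord; congr (_ + _); apply: eq_bigr => i _; rewrite ffunE.
case: (ex_minnP spans_ex) => n /asboolP [u u_span] n_min.
by exists n, u; split=> // k w w_span; apply: n_min; apply/asboolP; exists w.
Qed.

Lemma spans_sharp_perturb n (u v : {ffun 'I_n -> M}) :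
  spans_sharp u -> rel_flat (rel_vec C) (v - u) -> spans_sharp v.
Proof.
move=> [u_sharp u_span] /rel_flat_vec vu_flat.
have vu i : v i = (v - u) i + u i by rewrite !ffunE subrK.
split=> [i|m /u_span [c [f [Hf ->]]]].
  rewrite vu; apply: (submodD (rel_sharp_submod C_linrel)) => //.
  exact: rel_flat_sharp.
exists c, (f - \sum_i c i *: (v - u) i); split.
  apply: (submodB (rel_flat_submod C_linrel)) => //.
  by apply: (submod_sum (rel_flat_submod C_linrel)) => i; exact: (submodZ (rel_flat_submod C_linrel)).
rewrite -addrA; congr (_ + _); rewrite addrC -sumrB; apply: eq_bigr => i _.
by rewrite vu scalerDr addrAC subrr add0r.
Qed.

Lemma spans_sharp_vec n (u w : {ffun 'I_n -> M}) :
  spans_sharp u -> rel_sharp (rel_vec C) w ->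
  exists (A : 'M[R]_n) (f : {ffun 'I_n -> M}), rel_flat (rel_vec C) f /\ w = f + mx_act A u.
Proof.
move=> [_ u_span] /rel_sharp_vec w_sharp.
have {}w_sharp i : exists cf : ('I_n -> R) * M,
    rel_flat C cf.2 /\ w i = cf.2 + \sum_j cf.1 j *: u j.
  by have [c [f [Hf e]]] := u_span _ (w_sharp i); exists (c, f).
have [cf cfi] := choice w_sharp.
exists (\matrix_(i, j) (cf i).1 j), [ffun i => (cf i).2]; split.
  by apply/rel_flat_vec => i; rewrite ffunE; case: (cfi i).
apply/ffunP => i; rewrite !ffunE; case: (cfi i) => _ ->; congr (_ + _).
by apply: eq_bigr => j _; rewrite mxE.
Qed.

Lemma spans_sharp_drop n (u : {ffun 'I_n.+1 -> M}) k (a : 'I_n -> R) g :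
  spans_sharp u -> rel_flat C g -> u k = g + \sum_i a i *: u (lift k i) ->
  spans_sharp [ffun i => u (lift k i)].
Proof.
move=> [u_sharp u_span] Hg uk; split=> [i|m /u_span [d [f [Hf ->]]]].
  by rewrite ffunE.
exists (fun i => d k * a i + d (lift k i)), (f + d k *: g); split.
  apply: (submodD (rel_flat_submod C_linrel)) => //.
  exact: (submodZ (rel_flat_submod C_linrel)).
rewrite (bigD1_ord k) //= uk scalerDr -!addrA; congr (_ + (_ + _)).
rewrite scaler_sumr -big_split; apply: eq_bigr => i _.
by rewrite ffunE scalerDl scalerA.
Qed.

End Spanning.

Section MinimalSpanning.
Variables (R : comNzRingType) (J : R -> Prop) (M : lmodType R) (C : M * M -> Prop).
Hypothesis J_local : local_ring_with_max J.
Hypothesis C_linrel : linrel C.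
Hypothesis JM_split : forall x, ideal_times_mod J x ->
  exists a b, x = a + b /\ rel_d (rel_inv C) a /\ rel_d C b.
Let Ci_linrel := linrel_inv C_linrel.
Let J_ideal := local_ideal J_local.
Let flat_submod := rel_flat_submod C_linrel.

Lemma rel_flat_scale_J j x : J j -> rel_sharp C x -> rel_flat C (j *: x).
Proof.
move=> Jj [xdd xddi].
have jx_JM : ideal_times_mod J (j *: x).
  by exists [:: (j, x)]; split=> [p|]; [rewrite mem_seq1 => /eqP -> | rewrite big_seq1].
have [a [b [jx [ad bd]]]] := JM_split jx_JM.
have jx_dd := submodZ (rel_dd_submod C_linrel) j xdd.
have jx_ddi := submodZ (rel_dd_submod Ci_linrel) j xddi.
exists a, b; split=> //; split; split=> //.
  have -> : a = j *: x - b by rewrite jx addrK.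
  by apply: (submodB (rel_dd_submod C_linrel)) => //; exact: rel_d_dd.
have -> : b = j *: x - a by rewrite jx addrAC subrr add0r.
by apply: (submodB (rel_dd_submod Ci_linrel)) => //; exact: rel_d_dd.
Qed.

(* With [1 = j + s c_k], the part [j u_k] is flat by [rel_flat_scale_J]. *)
Lemma unit_coef_redundant n (u : {ffun 'I_n.+1 -> M}) (c : 'I_n.+1 -> R) k :
  (forall i, rel_sharp C (u i)) -> rel_flat C (\sum_i c i *: u i) -> ~ J (c k) ->
  exists (a : 'I_n -> R) g, rel_flat C g /\ u k = g + \sum_i a i *: u (lift k i).
Proof.
move=> u_sharp Hc ck; have [j [s [Jj e1]]] := local_comaximal J_local ck.
exists (fun i => - (s * c (lift k i))), (j *: u k + s *: \sum_i c i *: u i); split.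
  by apply: (submodD flat_submod); [exact: rel_flat_scale_J | exact: (submodZ flat_submod)].
rewrite (bigD1_ord k) //= scalerDr scalerA addrA -scalerDl -e1 scale1r -addrA.
rewrite scaler_sumr -big_split big1 ?addr0 // => i _.
by rewrite scalerA scaleNr; exact: subrr.
Qed.

Lemma rel_flat_lincombP n (u : {ffun 'I_n -> M}) (c : 'I_n -> R) :
  minimal_spans C u -> rel_flat C (\sum_i c i *: u i) <-> forall i, J (c i).
Proof.
move=> [u_span u_min]; split=> [Hc k|cJ]; last first.
  apply: (submod_sum flat_submod) => i.
  by apply: rel_flat_scale_J => //; exact: u_span.1.
case: n u c u_span u_min Hc k => [|n] u c u_span u_min Hc k; first by case: k.
apply: contrapT => ck; have [a [g [Hg uk]]] := unit_coef_redundant u_span.1 Hc ck.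
by have := u_min _ _ (spans_sharp_drop C_linrel u_span Hg uk); rewrite ltnn.
Qed.

(* [u - A (g + B u)] is a sharp C-predecessor of the flat [f], hence flat, and
   it differs from [(1 - A B) u] by the flat [A g]. *)
Lemma transition_near1 n (u f g : {ffun 'I_n -> M}) (A B : 'M[R]_n) :
  minimal_spans C u -> rel_flat (rel_vec C) f -> rel_flat (rel_vec C) g ->
  rel_vec C (u, f + mx_act A u) -> rel_vec C (g + mx_act B u, u) ->
  forall i j, J ((A *m B) i j - (i == j)%:R).
Proof.
move=> u_min Hf Hg Cu Cg; have CV := linrel_vec n C_linrel.
have actC (D : 'M[R]_n) (x y : {ffun 'I_n -> M}) :
    rel_vec C (x, y) -> rel_vec C (mx_act D x, mx_act D y).
  exact: mx_act_rel.
have u_sharp : rel_sharp (rel_vec C) u by apply/rel_sharp_vec; exact: u_min.1.1.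
have w_flat : rel_flat (rel_vec C) (u - mx_act A (g + mx_act B u)).
  apply: (rel_flat_of_next CV _ Hf).
    by have := linrelB CV Cu (actC A _ _ Cg); rewrite addrK.
  apply: (submodB (rel_sharp_submod CV)) => //; apply: (rel_sharp_map (actC A)).
  apply: (submodD (rel_sharp_submod CV)); first exact: rel_flat_sharp.
  exact: (rel_sharp_map (actC B)).
have : rel_flat (rel_vec C) (mx_act (1%:M - A *m B) u).
  rewrite mx_actBl mx_act1 mx_act_mul.
  have -> : u - mx_act A (mx_act B u) = u - mx_act A (g + mx_act B u) + mx_act A g.
    by rewrite mx_actD opprD addrA addrAC subrK.
  by apply: (submodD (rel_flat_submod CV)) => //; exact: (rel_flat_map (mx_actD A) (actC A)).
move=> /rel_flat_vec flat_rows i j; move: (flat_rows i); rewrite ffunE.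
move=> /(rel_flat_lincombP _ u_min) /(_ j) /(idealN J_ideal).
by rewrite mxE [1%:M i j]mxE mxE opprD opprK addrC.
Qed.

Lemma minimal_spans_reduction n (u : {ffun 'I_n -> M}) : minimal_spans C u ->
  exists (A A' : 'M[R]_n) (v : {ffun 'I_n -> M}),
    [/\ A *m A' = 1%:M, A' *m A = 1%:M, minimal_spans C v & rel_vec C (v, mx_act A v)].
Proof.
move=> u_min; have u_sharp : rel_sharp (rel_vec C) u by apply/rel_sharp_vec; exact: u_min.1.1.
have u_sharp' : rel_sharp (rel_inv (rel_vec C)) u by apply/rel_sharp_inv.
have [w [Cuw /(spans_sharp_vec u_min.1) [A [f [Hf Ew]]]]] := rel_sharp_next u_sharp.
have [z [Czu /rel_sharp_inv /(spans_sharp_vec u_min.1) [B [g [Hg Ez]]]]] :=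
  rel_sharp_next u_sharp'.
rewrite {w}Ew in Cuw; rewrite {z}Ez in Czu.
have [A' [AA' A'A]] := mx_inv_near1 J_local (transition_near1 u_min Hf Hg Cuw Czu).
have [v [Hvu Cv]] := flat_correction C_linrel AA' Hf Cuw.
exists A, A', v; split=> //; split; first exact: (spans_sharp_perturb C_linrel u_min.1 Hvu).
exact: u_min.2.
Qed.

End MinimalSpanning.

Section Reduction.
Variables (R : comNzRingType) (M : lmodType R) (C : M * M -> Prop) (n : nat).
Hypothesis C_linrel : linrel C.
Variable v : {ffun 'I_n -> M}.

Definition lincomb (x : 'rV[R]_n) : M := \sum_i x 0 i *: v i.

Lemma lincomb_linear : Rlinear lincomb.
Proof.
move=> a x y; rewrite /lincomb scaler_sumr -big_split; apply: eq_bigr => i _.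
by rewrite !mxE scalerDl scalerA.
Qed.

Lemma lincomb_mulmx A x : lincomb (x *m A) = \sum_i x 0 i *: mx_act A v i.
Proof.
rewrite /lincomb; under eq_bigr do rewrite mxE scaler_suml.
rewrite exchange_big; apply: eq_bigr => i _ /=.
by rewrite ffunE scaler_sumr; apply: eq_bigr => k _; rewrite scalerA.
Qed.

Lemma lincomb_sharp m : spans_sharp C v ->
  rel_sharp C m <-> exists f x, rel_flat C f /\ m = f + lincomb x.
Proof.
move=> [v_sharp v_span]; split=> [/v_span [c [f [Hf ->]]]|[f [x [Hf ->]]]].
  by exists f, (\row_i c i); split=> //; congr (_ + _); apply: eq_bigr => i _; rewrite mxE.
apply: (submodD (rel_sharp_submod C_linrel)); first exact: rel_flat_sharp.
apply: (submod_sum (rel_sharp_submod C_linrel)) => i.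
exact: (submodZ (rel_sharp_submod C_linrel)).
Qed.

Lemma is_reduction_lincomb (A A' : 'M[R]_n) :
  A *m A' = 1%:M -> A' *m A = 1%:M -> spans_sharp C v -> rel_vec C (v, mx_act A v) ->
  is_reduction C (fun x => x *m A) lincomb.
Proof.
move=> AA' A'A v_span Cv; split; first by move=> a x y; rewrite mulmxDl scalemxAl.
split; first by exists (fun x => x *m A') => x; rewrite -mulmxA ?AA' ?A'A mulmx1.
split; first exact: lincomb_linear.
split=> [m|x]; first exact: lincomb_sharp.
rewrite lincomb_mulmx; apply: linrel_sum => // i.
exact: linrelZ.
Qed.

Lemma meets_in_radical_lincomb (J : R -> Prop) :
  local_ring_with_max J ->
  (forall x, ideal_times_mod J x ->
     exists a b, x = a + b /\ rel_d (rel_inv C) a /\ rel_d C b) ->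
  minimal_spans C v -> meets_in_radical C lincomb.
Proof.
move=> J_local JM_split v_min x.
rewrite (rel_flat_lincombP J_local C_linrel JM_split _ v_min).
exact: iff_sym (radical_rV J_local x).
Qed.

End Reduction.

Theorem theorem4p13 (R : comNzRingType) (J : R -> Prop) (M : lmodType R)
    (C : M * M -> Prop) :
  local_ring_with_max J ->
  linrel C ->
  (forall x, ideal_times_mod J x ->
     exists a b, x = (a + b)%R /\ rel_d (rel_inv C) a /\ rel_d C b) ->
  sharp_flat_findim C ->
  exists (X : lmodType R) (T : X -> X) (rho : X -> M),
    is_reduction C T rho /\ free_mod X /\ meets_in_radical C rho.
Proof.
move=> J_local C_linrel JM_split /minimal_spans_exists [n [u u_min]].
have [A [A' [v [AA' A'A v_min Cv]]]] :=
  minimal_spans_reduction J_local C_linrel JM_split u_min.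
exists 'rV[R]_n, (fun x => x *m A), (lincomb v); split.
  exact: (is_reduction_lincomb C_linrel AA' A'A v_min.1 Cv).
split; first exact: free_rV.
exact: (meets_in_radical_lincomb C_linrel J_local JM_split v_min).
Qed.
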